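(* Let $Q$ be a polyhedral partially ordered abelian group and $D\subseteq Q$ a downset. Then $D=\bigcup_{\tau}\Gamma_\tau(D_\tau)$, the union over all faces $\tau$ of the positive cone $Q_+$.
   Context: A partially ordered abelian group is an abelian group $Q$ generated by a submonoid $Q_+$ (positive cone) whose only unit is $0$; $q\preceq q'$ iff $q'-q\in Q_+$. A face is a submonoid $\sigma\subseteq Q_+$ such that $Q_+\setminus\sigma$ is an ideal of the monoid $Q_+$; $Q$ is polyhedral if there are finitely many faces. A downset is a subset $D\subseteq Q$ with $D-Q_+=D$. For a face $\tau$ and downset $D$: the localization of $D$ along $\tau$ is $D_\tau=\{q\in D: q+\tau\subseteq D\}$ (again a downset). An element $q\in D$ is globally supported on $\tau$ (in $D$) if $q\notin D_{\tau'}$ for every face $\tau'\not\subseteq\tau$; $\Gamma_\tau D$ is the set of such elements. Thus $\Gamma_\tau(D_\tau)$ is the set of $q\in D_\tau$ with $q\notin(D_\tau)_{\tau'}$ for every face $\tau'\not\subseteq\tau$ (the local $\tau$-support of $D$). *)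

From HB Require Import structures.
From mathcomp Require Import all_boot all_order all_algebra.
From mathcomp Require Import boolp classical_sets cardinality.
Set Implicit Arguments. Unset Strict Implicit. Unset Printing Implicit Defensive.
Import GRing.Theory.
Local Open Scope ring_scope.
Local Open Scope classical_set_scope.

Section POGroup.
Variable Q : zmodType.

Definition submonoid (S : set Q) : Prop :=
  S 0 /\ (forall a b, S a -> S b -> S (a + b)).

Definition positive_cone (Qp : set Q) : Prop :=
  [/\ submonoid Qp,
      (forall p, Qp p -> Qp (- p) -> p = 0) &
      (forall q, exists a b, [/\ Qp a, Qp b & q = a - b])].

Definition is_face (Qp sigma : set Q) : Prop :=
  [/\ submonoid sigma, sigma `<=` Qp &
      (forall a b, (Qp `\` sigma) a -> Qp b -> (Qp `\` sigma) (a + b))].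

Definition polyhedral (Qp : set Q) : Prop := finite_set [set s | is_face Qp s].

Definition downset (Qp D : set Q) : Prop :=
  [set d - p | d in D & p in Qp] = D.

Definition localize (D tau : set Q) : set Q :=
  [set q | D q /\ (forall t, tau t -> D (q + t))].

Definition glob_supp (Qp : set Q) (tau D : set Q) : set Q :=
  [set q | D q /\ (forall tau', is_face Qp tau' -> ~ (tau' `<=` tau) ->
                    ~ localize D tau' q)].
End POGroup.

From mathcomp Require Import all_boot all_order all_algebra.
From mathcomp Require Import boolp classical_sets cardinality.
Import Order.TTheory GRing.Theory.
Local Open Scope ring_scope.
Local Open Scope classical_set_scope.

(* Given q in D, choose a face tau maximal among those with q in D_tau
   (there is one, the trivial face {0}, and only finitely many). If q were
   in (D_tau)_tau' for a face tau' not inside tau, then q would also lie in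
   D_sigma for the join sigma of tau and tau', a face strictly above tau.
   So q is globally supported on tau in D_tau. *)

Lemma proper_trans {T : Type} (A B C : set T) : A `<` B -> B `<` C -> A `<` C.
Proof. by rewrite -!properEset; exact: lt_trans. Qed.

Lemma ex_maximal_seq {T : Type} (s : seq (set T)) (A : set T) :
  exists2 B, B = A \/ B \in s & forall C, C \in s -> ~ B `<` C.
Proof.
elim: s => [|C0 s [B AsB Bmax]]; first by exists A => //; left.
have [BC0|nBC0] := pselect (B `<` C0).
  exists C0; first by right; rewrite mem_head.
  move=> C; rewrite inE => /predU1P[->|Cs]; first exact: properxx.
  by move=> C0C; apply: (Bmax C Cs); exact: proper_trans C0C.
exists B; first by case: AsB => [|BS]; [left|right; rewrite inE BS orbT].
by move=> C; rewrite inE => /predU1P[->//|]; exact: Bmax.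
Qed.

Lemma ex_maximal_finite_set {T : Type} {F : set (set T)} :
  finite_set F -> F !=set0 -> exists2 B, F B & forall C, F C -> ~ B `<` C.
Proof.
move=> /finite_seqP[s ->] [A sA].
have [B AsB Bmax] := @ex_maximal_seq T s A.
by exists B => //; case: AsB => [->|].
Qed.

Section Faces.
Context {Q : zmodType} (Qp : set Q).
Hypothesis Qp_monoid : submonoid Qp.

Lemma downsetB {D : set Q} {d p : Q} : downset Qp D -> D d -> Qp p -> D (d - p).
Proof. by move=> Ddown Dd Qpp; rewrite -Ddown; exists d => //; exists p. Qed.

Lemma localize0 (D : set Q) : localize D [set 0] = D.
Proof.
by apply/seteqP; split=> [q []//|q Dq]; split=> // _ ->; rewrite addr0.
Qed.

Lemma is_face0 : (forall p, Qp p -> Qp (- p) -> p = 0) -> is_face Qp [set 0].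
Proof.
move: Qp_monoid => [Qp0 QpD] pointed; split=> [|_ -> //|a b [Qpa a_neq0] Qpb].
  by split=> // _ _ -> ->; rewrite addr0.
split; first exact: QpD.
move=> /= ab0; apply: a_neq0; apply: pointed => //.
by rewrite -[- a]addr0 -ab0 addKr.
Qed.

Definition face_join (tau tau' : set Q) : set Q :=
  [set p | Qp p /\ exists t t', [/\ tau t, tau' t' & Qp (t + t' - p)]].

Lemma is_face_join (tau tau' : set Q) :
  submonoid tau -> submonoid tau' -> is_face Qp (face_join tau tau').
Proof.
move: Qp_monoid => [Qp0 QpD] [tau0 tauD] [tau'0 tau'D]; split => [|p []//|].
  split; first by split=> //; exists 0, 0; rewrite !addr0 subrr.
  move=> a b [Qpa [t1 [t1' [h1 h1' le1]]]] [Qpb [t2 [t2' [h2 h2' le2]]]].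
  split; first exact: QpD.
  exists (t1 + t2), (t1' + t2'); split; [exact: tauD|exact: tau'D|].
  have -> : t1 + t2 + (t1' + t2') - (a + b) = (t1 + t1' - a) + (t2 + t2' - b).
    by rewrite (addrACA t1 t2 t1' t2') opprD (addrACA (t1 + t1')).
  exact: QpD.
move=> a b [Qpa a_notin] Qpb; split; first exact: QpD.
move=> [_ [t [t' [ht ht' le_ab]]]]; apply: a_notin; split=> //.
exists t, t'; split=> //.
have -> : t + t' - a = (t + t' - (a + b)) + b by rewrite opprD addrA addrNK.
exact: QpD.
Qed.

Lemma face_joinl (tau tau' : set Q) :
  tau `<=` Qp -> tau' 0 -> tau `<=` face_join tau tau'.
Proof.
move=> tauQp tau'0 t ht; split; first exact: tauQp.
by exists t, 0; rewrite addr0 subrr; split=> //; case: Qp_monoid.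
Qed.

Lemma face_joinr (tau tau' : set Q) :
  tau 0 -> tau' `<=` Qp -> tau' `<=` face_join tau tau'.
Proof.
move=> tau0 tau'Qp t' ht'; split; first exact: tau'Qp.
by exists 0, t'; rewrite add0r subrr; split=> //; case: Qp_monoid.
Qed.

Lemma localize_face_join (D tau tau' : set Q) : downset Qp D ->
  localize (localize D tau) tau' `<=` localize D (face_join tau tau').
Proof.
move=> Ddown q [[Dq _] Dq_tau_tau']; split=> // p [_ [t [t' [ht ht' le_p]]]].
have := downsetB Ddown ((Dq_tau_tau' t' ht').2 t ht) le_p.
by rewrite [t + t']addrC -[q + t' + t]addrA opprB addrACA subrr addr0.
Qed.

End Faces.

Theorem theorem3p10 (Q : zmodType) (Qp : set Q)
  (hQp : positive_cone Qp) (hpoly : polyhedral Qp)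
  (D : set Q) (hD : downset Qp D) :
  D = \bigcup_(tau in [set s | is_face Qp s]) glob_supp Qp tau (localize D tau).
Proof.
case: hQp => Qp_monoid pointed _.
apply/seteqP; split=> [q Dq|q [tau _ [[Dq _] _]]//].
pose F tau := is_face Qp tau /\ localize D tau q.
have finF : finite_set F by apply: sub_finite_set hpoly => tau [].
have F0 : F [set 0] by split; [exact: is_face0|rewrite localize0].
have [tau [ftau Dq_tau] tau_max] := ex_maximal_finite_set finF (ex_intro _ _ F0).
exists tau => //; split=> // tau' ftau' tau'_ntau Dq_tau_tau'.
case: (ftau) (ftau') => [tau_monoid tauQp _] [tau'_monoid tau'Qp _].
apply: (tau_max (face_join Qp tau tau')).
  by split; [exact: is_face_join|exact: localize_face_join Dq_tau_tau'].
split; first by apply: face_joinl => //; case: tau'_monoid.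
move=> join_tau; apply: tau'_ntau; apply: subset_trans join_tau.
by apply: face_joinr => //; case: tau_monoid.
Qed.
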